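(* Let $M=\sum_{n=1}^{\infty}\frac{2^{n-1}}{(3^{2/3})^n}=\frac{1}{3^{2/3}-2}$. Let the open intervals $J_n^k\subset[0,M]$ ($n\ge 1$, $1\le k\le 2^{n-1}$) and the set $A\subset[0,M]$ be constructed as follows: $J_1^1$ is the open interval of length $3^{-2/3}$ centered at the midpoint of $[0,M]$; for $n\ge 2$, the $2^{n-1}$ intervals $J_n^1,\dots,J_n^{2^{n-1}}$ are the open intervals of length $(3^{2/3})^{-n}$ centered at the midpoints of the $2^{n-1}$ connected components of $[0,M]\setminus(J_1\cup\dots\cup J_{n-1})$, where $J_m=\bigcup_{k=1}^{2^{m-1}}J_m^k$. (These intervals are pairwise disjoint.) Let $A=[0,M]\setminus\bigcup_{n\ge1}J_n$. Define $g:[0,M]\to\mathbb{R}$ by $g(x)=0$ for $x\in A$, and for $x\in J_n^k$, $$g(x)=\frac{4}{\mathcal{L}(J_n^k)^{1/2}}\,\mathrm{dist}(x,\partial J_n^k),$$ where $\mathcal{L}$ denotes Lebesgue measure (length). Then $g$ takes values in $[0,\infty)$ and: (1) $\max\{g(x): x\in J_n^k\}=2\,\mathcal{L}(J_n^k)^{1/2}$ for every $n,k$; (2) $g(x)=0$ if and only if $x\in A$; (3) $\int_{J_n^k}g(x)\,dx=\mathcal{L}(J_n^k)^{3/2}=\frac{1}{3^n}$ for every $n,k$, and $\int_0^M g(x)\,dx=1$; (4) $g$ is $\tfrac12$-Hölder continuous on $[0,M]$.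
   Context: $\mathcal{L}$ denotes one-dimensional Lebesgue measure; $\partial J$ denotes the set of endpoints of an interval $J$. *)

From HB Require Import structures.
From mathcomp Require Import all_boot all_order all_algebra.
From mathcomp Require Import all_classical all_reals all_analysis.
Set Implicit Arguments. Unset Strict Implicit. Unset Printing Implicit Defensive.
Import Order.TTheory GRing.Theory Num.Theory.
Import numFieldNormedType.Exports.
Local Open Scope classical_set_scope.
Local Open Scope ring_scope.

Section Construction.
Variable R : realType.

Definition rr : R := (3%:R : R) `^ (2%:R / 3%:R).

Definition MM : R := (rr - 2%:R)^-1.

Definition len (n : nat) : R := (rr ^+ n)^-1.

(* comps m = the list of the 2^m closed connected components [a,b]
   (stored as pairs (a,b)) of [0,M] \ (J_1 u ... u J_m), i.e. the
   components in which the intervals of generation m+1 are placed. *)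
Fixpoint comps (m : nat) : seq (R * R) :=
  match m with
  | 0 => [:: (0, MM)]
  | m'.+1 =>
      let l := len m in
      flatten [seq let c := (p.1 + p.2) / 2%:R in
                   [:: (p.1, c - l / 2%:R); (c + l / 2%:R, p.2)]
              | p <- comps m']
  end.

(* J_n^k for n >= 1 and 1 <= k <= 2^(n-1): the open interval of length
   len n centred at the midpoint of the k-th component of comps (n-1). *)
Definition Jcomp (n k : nat) : R * R := nth (0, 0) (comps n.-1) k.-1.
Definition Jmid (n k : nat) : R := ((Jcomp n k).1 + (Jcomp n k).2) / 2%:R.
Definition Jleft (n k : nat) : R := Jmid n k - len n / 2%:R.
Definition Jright (n k : nat) : R := Jmid n k + len n / 2%:R.
Definition J (n k : nat) : set R := `]Jleft n k, Jright n k[.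

Definition valid_index (nk : nat * nat) : Prop :=
  (1 <= nk.1)%N /\ (1 <= nk.2 <= 2 ^ nk.1.-1)%N.

Definition AA : set R :=
  `[0, MM] `\` [set x | exists nk, valid_index nk /\ J nk.1 nk.2 x].

Definition LJ (n k : nat) : R := fine (lebesgue_measure (J n k)).

Definition distbd (n k : nat) (x : R) : R :=
  Num.min `|x - Jleft n k| `|x - Jright n k|.

(* g(x) = 4 / L(J_n^k)^(1/2) * dist(x, dJ_n^k) if x in J_n^k, 0 otherwise
   (the J_n^k being pairwise disjoint, the index (n,k) is unique). *)
Definition gg (x : R) : R :=
  let nk := xget (0%N, 0%N) [set nk | valid_index nk /\ J nk.1 nk.2 x] in
  if pselect (valid_index nk /\ J nk.1 nk.2 x) then
    4%:R / Num.sqrt (LJ nk.1 nk.2) * distbd nk.1 nk.2 x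
  else 0.

End Construction.

Arguments gg {R} x.
Arguments distbd {R} n k x.
Arguments J R n k : clear implicits.
Arguments LJ R n k : clear implicits.
Arguments AA R : clear implicits.
Arguments MM R : clear implicits.
Arguments rr R : clear implicits.

(* With r = 3^(2/3), every component of [0,M] \ (J_1 u ... u J_m) has width
   c_m = M / r^m: this solves c_{m+1} = (c_m - r^-(m+1)) / 2, and
   r^-(m+1) < c_m, so the intervals of level m+1 fit strictly inside.
   Hence J_{m+1}^{i+1} is the gap between the two children of the i-th
   component of level m; the components of one level are ordered from left to
   right and nested in those of the previous levels, which makes the J_n^k
   pairwise disjoint.
   On J_n^k = ]a, b[, of length L = r^-n, g is 4 L^(-1/2) times the tent
   min(x - a, b - x), which is 1-Lipschitz, peaks with value L/2 and has
   integral L^2/4.  This gives the maximum 2 L^(1/2) and the integral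
   L^(3/2) = 3^-n; the 2^(n-1) intervals of level n thus carry 2^(n-1)/3^n,
   which sums to 1.  If x and y lie in a common J_n^k then
   |g x - g y| <= 4 L^(-1/2) |x - y| <= 4 |x - y|^(1/2) as |x - y| <= L;
   otherwise g x <= 4 L^(-1/2) dist(x, dJ_n^k) <= 4 |x - y|^(1/2), and
   likewise for y. *)

From HB Require Import structures.
From mathcomp Require Import all_boot all_order all_algebra.
From mathcomp Require Import all_classical all_reals all_analysis.
From mathcomp Require Import ring lra measurable_realfun.
Set Implicit Arguments. Unset Strict Implicit. Unset Printing Implicit Defensive.
Import Order.TTheory GRing.Theory Num.Theory.
Import numFieldNormedType.Exports.
Local Open Scope classical_set_scope.
Local Open Scope ring_scope.

Lemma size_flatten_pairs (T : Type) (f g : T -> T) (s : seq T) :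
  size (flatten [seq [:: f p; g p] | p <- s]) = (size s).*2.
Proof. by elim: s => //= x s ->. Qed.

Lemma nth_flatten_pairs (T : Type) (d : T) (f g : T -> T) (s : seq T) i :
  (i < size s)%N ->
  nth d (flatten [seq [:: f p; g p] | p <- s]) i.*2 = f (nth d s i) /\
  nth d (flatten [seq [:: f p; g p] | p <- s]) i.*2.+1 = g (nth d s i).
Proof. by elim: s i => [|x s IH] [|i] //= /IH. Qed.

Lemma ltn_exp2S_half m i : (i < 2 ^ m.+1)%N ->
  exists2 j, (j < 2 ^ m)%N & i = j.*2 \/ i = j.*2.+1.
Proof.
move=> lti; exists i./2; first by rewrite ltn_half_double -mul2n -expnS.
rewrite -[X in X = _ \/ _]odd_double_half -[X in _ \/ X = _]odd_double_half.
by case: (odd i); [right|left].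
Qed.

Section RealFacts.
Variable R : realType.
Local Notation mu := (@lebesgue_measure R).

Definition tent (a b x : R) : R := Num.min (x - a) (b - x).

Lemma tent_lipschitz a b x y : `|tent a b x - tent a b y| <= `|x - y|.
Proof.
rewrite /tent !minEle.
by case: (leP (x - a) (b - x)) => ?; case: (leP (y - a) (b - y)) => ?;
  case: (lerP 0 (x - y)) => xy; rewrite ?(ger0_norm xy) ?(ltr0_norm xy) ler_norml;
  apply/andP; split; lra.
Qed.

Lemma tent_gt0 a b x : a < x < b -> 0 < tent a b x.
Proof. by move=> /andP[ax xb]; rewrite lt_min !subr_gt0 ax xb. Qed.

Lemma tent_le_dist a b x y : ~ (a < y < b) -> tent a b x <= `|x - y|.
Proof.
move=> yNab; rewrite ge_min; apply/orP.
have [ay|ya] := ltP a y; last by left; rewrite (le_trans _ (ler_norm _))// lerD2l lerN2.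
have [yb|le_by] := ltP y b; first by case: yNab; rewrite ay.
by right; rewrite distrC (le_trans _ (ler_norm _))// lerD2r.
Qed.

Lemma tent_le_half a b x : tent a b x <= (b - a) / 2%:R.
Proof. by rewrite ge_min; case: (lerP (x - a) ((b - a) / 2%:R)) => ?; lra. Qed.

Lemma tent_midpoint a b : a <= b -> tent a b ((a + b) / 2%:R) = (b - a) / 2%:R.
Proof. by move=> ab; rewrite /tent min_l; lra. Qed.

Lemma continuous_tent a b : continuous (tent a b).
Proof.
move=> x; apply: (@continuous_min _ _ (fun y => y - a) (fun y => b - y)).
- by apply: continuousB; [exact: cvg_id|exact: cvg_cst].
- by apply: continuousB; [exact: cvg_cst|exact: cvg_id].
Qed.

Lemma measurable_EFin_continuous (D : set R) (f : R -> R) : continuous f ->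
  measurable_fun D (EFin \o f).
Proof.
by move=> cf; apply/measurable_EFinP/measurable_funTS; exact: continuous_measurable_fun.
Qed.

Lemma integral_itv_affine (f : R -> R) (u v c w : R) : u < v -> continuous f ->
  {in `]u, v[, forall x, f x = c * (x - w)} ->
  (\int[mu]_(x in `[u, v]) (f x)%:E =
    (c / 2%:R * ((v - w) ^+ 2 - (u - w) ^+ 2))%:E)%E.
Proof.
move=> uv cf f_affine.
pose F : R -> R := cst (c / 2%:R) * ((id - cst w) * (id - cst w)).
have dF (x : R) : is_derive x (1 : R) F (c * (x - w)).
  apply: is_derive_eq; rewrite /GRing.scale /= mulr0 addr0.
  by rewrite -[(id - cst w) x]/(x - w); field.
have cF : continuous F.
  move=> x; apply: (@differentiable_continuous _ _ (R : normedModType R)).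
  by apply/derivable1_diffP; have [] := dF x.
rewrite (@continuous_FTC2 _ _ F) //.
- have Fy y : F y = c / 2%:R * ((y - w) * (y - w)) by [].
  by rewrite -EFinB !Fy; congr (_%:E); ring.
- exact/continuous_subspaceT.
- split; first by move=> x _; have [] := dF x.
  + exact/cvg_at_right_filter/cF.
  + exact/cvg_at_left_filter/cF.
- by move=> x ux; rewrite derive1E f_affine//; have [_ ->] := dF x.
Qed.

Lemma integral_scaled_tent c a b : a < b ->
  (\int[mu]_(x in `]a, b[) (c * tent a b x)%:E = (c * (b - a) ^+ 2 / 4%:R)%:E)%E.
Proof.
move=> ab; set m := (a + b) / 2%:R; have em : m = (a + b) / 2%:R by [].
have am : a < m by lra.
have mb : m < b by lra.
have cf : continuous (fun x => c * tent a b x).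
  by move=> x; apply: continuousM; [exact: cvg_cst|exact: continuous_tent].
have mf D : measurable_fun D (EFin \o (fun x => c * tent a b x)).
  exact: measurable_EFin_continuous.
rewrite (@itv_bndbnd_setU _ _ _ (BRight m)) ?bnd_simp ?ltW//.
rewrite integral_setU //; last 2 first.
- exact: mf.
- rewrite disj_set2E; apply/eqP/seteqP; split => // x [] /=.
  by rewrite !in_itv/= => /andP[_ ?] /andP[? _]; lra.
rewrite integral_itv_bndoo; last exact: mf.
rewrite -(integral_itv_bndoo true false); last exact: mf.
rewrite -[X in (_ + X)%E](integral_itv_bndoo true false); last exact: mf.
rewrite (@integral_itv_affine _ a m c a) //; last first.
  by move=> x; rewrite in_itv/= => /andP[? ?]; rewrite /tent min_l//; lra.
rewrite (@integral_itv_affine _ m b (- c) b) //; last first.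
  move=> x; rewrite in_itv/= => /andP[? ?]; rewrite /tent min_r; last by lra.
  by rewrite mulNr -mulrN opprB.
by rewrite -EFinD em; congr (_%:E); field.
Qed.

Lemma divr_sqrt_le_sqrt (d t L : R) : 0 <= d -> d <= t -> d <= L -> 0 < L ->
  d / Num.sqrt L <= Num.sqrt t.
Proof.
move=> d0 dt dL L0.
rewrite ler_pdivrMr ?sqrtr_gt0// -sqrtrM ?(le_trans d0)//.
rewrite -(ger0_norm d0) -sqrtr_sqr; apply: ler_wsqrtr.
by rewrite expr2 ler_pM.
Qed.

Lemma holder_half_continuous (f : R -> R) (C : R) :
  (forall x y, `|f x - f y| <= C * Num.sqrt `|x - y|) -> continuous f.
Proof.
move=> fC x; apply/cvgrPdist_lt => e e0.
have C1 : 0 < `|C| + 1 by rewrite ltr_wpDl.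
set d := e / (`|C| + 1); have d0 : 0 < d by rewrite divr_gt0.
apply/nbhs_ballP; exists (d ^+ 2) => [|t /= xt]; first by rewrite /= exprn_gt0.
apply: le_lt_trans (fC x t) _.
have sqrt_lt : Num.sqrt `|x - t| < d.
  by rewrite -(ger0_norm (ltW d0)) -[X in _ < X]sqrtr_sqr ltr_sqrt ?exprn_gt0.
have leC : C <= `|C| + 1 by rewrite (le_trans (ler_norm C)) ?lerDl.
apply: le_lt_trans (ler_wpM2r (sqrtr_ge0 _) leC) _.
by rewrite -(divfK (lt0r_neq0 C1) e) -/d mulrC ltr_pM2r.
Qed.

Lemma divr_sqrt_mul (c L : R) : 0 < L -> c / Num.sqrt L * L = c * Num.sqrt L.
Proof.
move=> L0; rewrite -{2}(sqr_sqrtr (ltW L0)) expr2 mulrA divfK//.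
by rewrite gt_eqF// sqrtr_gt0.
Qed.

Lemma powR_3half (L : R) : 0 < L -> L `^ (3%:R / 2%:R) = L * Num.sqrt L.
Proof.
move=> L0; have -> : (3%:R / 2%:R : R) = 1 + 2^-1 by field.
by rewrite powRD ?gt_eqF ?implybT// powRr1 ?powR12_sqrt ?ltW.
Qed.

Lemma cvg_geometric_partial_sums (u : nat -> R) (a z : R) :
  `|z| < 1 -> (forall i, u i = a * z ^+ i) ->
  (fun N : nat => \sum_(0 <= i < N) u i) @ \oo --> a * (1 - z)^-1.
Proof.
move=> z1 eq_u; rewrite (_ : (fun N => _) = series (geometric a z)).
  exact: cvg_geometric_series.
by apply/funext => N; apply: eq_bigr => i _; rewrite eq_u.
Qed.

End RealFacts.

Section Constants.
Variable R : realType.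
Local Notation r := (rr R).
Local Notation M := (MM R).

Lemma rr_cube : r ^+ 3 = 9%:R.
Proof.
rewrite /rr -powR_mulrn ?powR_ge0// -powRrM.
have -> : (2%:R / 3%:R * 3%:R : R) = 2%:R by rewrite divfK// pnatr_eq0.
by rewrite powR_mulrn// expr2 -natrM.
Qed.

Lemma rr_gt2 : 2%:R < r.
Proof.
have r_ge0 : 0 <= r by rewrite powR_ge0.
rewrite ltNge; apply/negP => r_le2.
have : r ^+ 3 <= 2%:R ^+ 3 by rewrite lerXn2r// nnegrE.
by rewrite rr_cube -natrX ler_nat.
Qed.

Lemma rr_gt0 : 0 < r.
Proof. exact: lt_trans rr_gt2. Qed.

Lemma len_gt0 n : 0 < len R n.
Proof. by rewrite invr_gt0 exprn_gt0// rr_gt0. Qed.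

Lemma len_mul_sqrt n : len R n * Num.sqrt (len R n) = (3%:R ^+ n)^-1.
Proof.
have len_ge0 := ltW (len_gt0 n).
apply/eqP; rewrite -(@eqrXn2 _ 2) ?mulr_ge0 ?sqrtr_ge0 ?invr_ge0 ?exprn_ge0//;
  last exact/ltW/rr_gt0.
rewrite exprMn sqr_sqrtr// -exprSr /len -!exprVn -!exprM !exprVn.
by rewrite mulnC exprM rr_cube mulnC exprM expr2 -natrM.
Qed.

Definition comp_width m : R := M / r ^+ m.

Lemma comp_width_gt0 m : 0 < comp_width m.
Proof.
by rewrite divr_gt0 ?exprn_gt0 ?rr_gt0// invr_gt0 subr_gt0 rr_gt2.
Qed.

Lemma comp_widthS m : comp_width m.+1 = (comp_width m - len R m.+1) / 2%:R.
Proof.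
have r_neq0 : r != 0 by rewrite gt_eqF// rr_gt0.
have r2_neq0 : r - 2%:R != 0 by rewrite subr_eq0 gt_eqF// rr_gt2.
rewrite /comp_width /len /MM exprS; field.
by rewrite r_neq0 expf_neq0.
Qed.

Lemma len_lt_comp_width m : len R m.+1 < comp_width m.
Proof.
have r_gt0 := rr_gt0.
rewrite /comp_width /len exprS invfM ltr_pM2r ?invr_gt0 ?exprn_gt0//.
by rewrite ltf_pV2 ?posrE ?subr_gt0 ?rr_gt2// ltrBlDr ltrDl.
Qed.

End Constants.

Section Components.
Variable R : realType.

Definition comp_left m i : R := (nth (0, 0) (comps R m) i).1.
Definition comp_right m i : R := (nth (0, 0) (comps R m) i).2.

Lemma size_comps m : size (comps R m) = (2 ^ m)%N.
Proof. by elim: m => //= m IH; rewrite size_flatten_pairs IH expnS mul2n. Qed.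

Lemma comps_children m i : (i < 2 ^ m)%N ->
  let c := (comp_left m i + comp_right m i) / 2%:R in
  [/\ comp_left m.+1 i.*2 = comp_left m i,
      comp_right m.+1 i.*2 = c - len R m.+1 / 2%:R,
      comp_left m.+1 i.*2.+1 = c + len R m.+1 / 2%:R &
      comp_right m.+1 i.*2.+1 = comp_right m i].
Proof.
move=> lti; rewrite -size_comps in lti; rewrite /comp_left /comp_right /=.
by have [-> ->] := nth_flatten_pairs (0, 0)
  (fun p => (p.1, (p.1 + p.2) / 2%:R - len R m.+1 / 2%:R))
  (fun p => ((p.1 + p.2) / 2%:R + len R m.+1 / 2%:R, p.2)) lti.
Qed.

Lemma comp_right_sub_left m i : (i < 2 ^ m)%N ->
  comp_right m i - comp_left m i = comp_width R m.
Proof.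
elim: m i => [|m IH] i.
  by rewrite ltnS leqn0 => /eqP->; rewrite /comp_width expr0 divr1 subr0.
move=> /ltn_exp2S_half[j ltj eqi]; rewrite comp_widthS -(IH _ ltj).
by have [l1 r1 l2 r2] := comps_children ltj; case: eqi => ->;
  [rewrite l1 r1|rewrite l2 r2]; field.
Qed.

Lemma comp_left_le_right m i : (i < 2 ^ m)%N -> comp_left m i <= comp_right m i.
Proof. by move=> lti; rewrite -subr_ge0 comp_right_sub_left// ltW// comp_width_gt0. Qed.

Lemma comp_children_sub m i : (i < 2 ^ m.+1)%N ->
  comp_left m i./2 <= comp_left m.+1 i /\ comp_right m.+1 i <= comp_right m i./2.
Proof.
move=> /ltn_exp2S_half[j ltj eqi].
have [l1 r1 l2 r2] := comps_children ltj; have wj := comp_right_sub_left ltj.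
have := len_lt_comp_width R m; have := len_gt0 R m.+1.
case: eqi => ->; first by rewrite doubleK l1 r1; lra.
by rewrite -[_./2]/(uphalf j.*2) uphalf_double l2 r2; lra.
Qed.

Lemma comp_nested n d i : (i < 2 ^ (n + d))%N ->
  comp_left n (i %/ 2 ^ d) <= comp_left (n + d) i /\
  comp_right (n + d) i <= comp_right n (i %/ 2 ^ d).
Proof.
elim: d i => [|d IH] i; first by rewrite expn0 divn1 addn0.
rewrite addnS => lti; have [l1 r1] := comp_children_sub lti.
have lti2 : (i./2 < 2 ^ (n + d))%N by rewrite ltn_half_double -mul2n -expnS.
rewrite expnS divnMA divn2; have [l2 r2] := IH _ lti2.
by split; [exact: le_trans l1|exact: le_trans r2].
Qed.

Lemma comp_right_lt_leftS m i : (i.+1 < 2 ^ m)%N ->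
  comp_right m i < comp_left m i.+1.
Proof.
elim: m i => [|m IH] i; first by rewrite expn0.
move=> ltSi; have /ltn_exp2S_half[j ltj eqi] := ltn_trans (ltnSn i) ltSi.
have [_ r1 l2 r2] := comps_children ltj.
case: eqi ltSi => -> ltSi; first by rewrite r1 l2; have := len_gt0 R m.+1; lra.
have ltSj : (j.+1 < 2 ^ m)%N.
  by rewrite -ltn_double doubleS -[X in (_ < X)%N]mul2n -expnS.
have [l3 _ _ _] := comps_children ltSj.
by rewrite -doubleS r2 l3 IH.
Qed.

Lemma comp_sorted m i j : (i < j)%N -> (j < 2 ^ m)%N ->
  comp_right m i < comp_left m j.
Proof.
elim: j => [//|j IH]; rewrite ltnS leq_eqVlt => /predU1P[->|ltij] ltSj.
  exact: comp_right_lt_leftS.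
have ltj := ltn_trans (ltnSn j) ltSj.
apply: lt_trans (IH ltij ltj) (le_lt_trans (comp_left_le_right ltj) _).
exact: comp_right_lt_leftS.
Qed.

Lemma comp_left_mono m i j : (i <= j)%N -> (j < 2 ^ m)%N ->
  comp_left m i <= comp_left m j.
Proof.
rewrite leq_eqVlt => /predU1P[->//|ltij] ltj.
exact/ltW/(le_lt_trans (comp_left_le_right (ltn_trans ltij ltj)))/comp_sorted.
Qed.

Lemma comp_right_mono m i j : (i <= j)%N -> (j < 2 ^ m)%N ->
  comp_right m i <= comp_right m j.
Proof.
rewrite leq_eqVlt => /predU1P[->//|ltij] ltj.
exact/ltW/(lt_le_trans (comp_sorted ltij ltj))/comp_left_le_right.
Qed.

End Components.

Lemma valid_indexE nk : valid_index nk ->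
  exists m i, nk = (m.+1, i.+1) /\ (i < 2 ^ m)%N.
Proof.
by case: nk => [[|m] [|i]] [] //= _ lti; exists m, i.
Qed.

Lemma valid_index_succ m i : (i < 2 ^ m)%N -> valid_index (m.+1, i.+1).
Proof. by split. Qed.

Section Intervals.
Variable R : realType.
Local Notation M := (MM R).

Lemma J_mem n k (x : R) : J R n k x <-> Jleft R n k < x < Jright R n k.
Proof. by rewrite /J /= in_itv. Qed.

Lemma Jright_sub_left n k : Jright R n k - Jleft R n k = len R n.
Proof. rewrite /Jright /Jleft; lra. Qed.

Lemma Jleft_lt_right n k : Jleft R n k < Jright R n k.
Proof. by rewrite -subr_gt0 Jright_sub_left len_gt0. Qed.

Lemma LJ_len n k : LJ R n k = len R n.
Proof.
by rewrite /LJ /J lebesgue_measure_itv /= lte_fin Jleft_lt_right -EFinB Jright_sub_left.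
Qed.

Lemma J_gap m i : (i < 2 ^ m)%N ->
  Jleft R m.+1 i.+1 = comp_right R m.+1 i.*2 /\
  Jright R m.+1 i.+1 = comp_left R m.+1 i.*2.+1.
Proof. by move=> lti; have [_ -> -> _] := comps_children R lti. Qed.

Lemma J_sub_comp m i x : (i < 2 ^ m)%N -> J R m.+1 i.+1 x ->
  comp_left R m i < x < comp_right R m i.
Proof.
move=> lti /J_mem/andP[ltlx ltxr]; have [l r] := J_gap lti.
have [l1 _ _ r2] := comps_children R lti.
have lt2i : (i.*2 < 2 ^ m.+1)%N by rewrite expnS mul2n ltn_double.
have lt2iS : (i.*2.+1 < 2 ^ m.+1)%N by rewrite expnS mul2n -doubleS leq_double.
have := comp_left_le_right R lt2i; have := comp_left_le_right R lt2iS.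
rewrite l1 r2 -l -r => ? ?; apply/andP; split; lra.
Qed.

Lemma J_sub_itv0M n k x : valid_index (n, k) -> J R n k x -> 0 < x < M.
Proof.
move=> /valid_indexE[m [i [[-> ->] lti]]] /(J_sub_comp lti)/andP[ltlx ltxr].
have [] := @comp_nested R 0%N m i lti; rewrite divn_small// => l r.
by rewrite (le_lt_trans l ltlx) (lt_le_trans ltxr r).
Qed.

Lemma J_outside_deeper_comps m i m' j x : (m < m')%N -> (i < 2 ^ m)%N ->
  (j < 2 ^ m')%N -> J R m.+1 i.+1 x ->
  x < comp_left R m' j \/ comp_right R m' j < x.
Proof.
move=> /subnKC<-; set d := (m' - m.+1)%N => lti ltj /J_mem/andP[ltlx ltxr].
have [l r] := comp_nested R ltj; set p := (j %/ 2 ^ d)%N in l r.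
have ltp : (p < 2 ^ m.+1)%N by rewrite ltn_divLR ?expn_gt0// -expnD.
have [gl gr] := J_gap lti; rewrite gl in ltlx; rewrite gr in ltxr.
have lt2i : (i.*2 < 2 ^ m.+1)%N by rewrite expnS mul2n ltn_double.
have [le_p2i|lt2ip] := leqP p i.*2.
  by right; apply: le_lt_trans r (le_lt_trans (comp_right_mono R le_p2i lt2i) ltlx).
by left; apply: lt_le_trans ltxr (le_trans (comp_left_mono R lt2ip ltp) l).
Qed.

Lemma J_disjoint n k n' k' : valid_index (n, k) -> valid_index (n', k') ->
  (n, k) <> (n', k') -> J R n k `&` J R n' k' = set0.
Proof.
wlog le_nn' : n k n' k' / (n <= n')%N.
  move=> wlog v v' neq; have [le_nn'|/ltnW le_n'n] := leqP n n'; first exact: wlog.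
  by rewrite setIC; apply: wlog => // eq; apply: neq; case: eq => -> ->.
move=> /valid_indexE[m [i [[en ->] lti]]] /valid_indexE[m' [i' [[en' ->] lti']]].
subst n n'; rewrite ltnS in le_nn' => neq.
apply/seteqP; split => // x [Jx Jx'].
have /andP[l' r'] := J_sub_comp lti' Jx'.
move: le_nn'; rewrite leq_eqVlt => /predU1P[eqm|ltm].
  subst m'; have /andP[l r] := J_sub_comp lti Jx.
  have [ltii'|lti'i|eqi] := ltngtP i i'; last by apply: neq; rewrite eqi.
    by have := comp_sorted R ltii' lti'; lra.
  by have := comp_sorted R lti'i lti; lra.
by case: (J_outside_deeper_comps ltm lti lti' Jx); lra.
Qed.

Lemma J_succ_unique m i m' i' x : (i < 2 ^ m)%N -> (i' < 2 ^ m')%N ->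
  J R m.+1 i.+1 x -> J R m'.+1 i'.+1 x -> (m, i) = (m', i').
Proof.
move=> lti lti' Jx Jx'; case: (eqVneq (m, i) (m', i')) => // /eqP neq.
have : (m.+1, i.+1) <> (m'.+1, i'.+1) by case=> em ei; apply: neq; rewrite em ei.
move/(J_disjoint (valid_index_succ lti) (valid_index_succ lti')).
by rewrite -subset0 => /(_ x (conj Jx Jx')).
Qed.

End Intervals.

Section Profile.
Variable R : realType.
Local Notation tentJ n k := (tent (Jleft R n k) (Jright R n k)).

Lemma gg_tent n k (x : R) : valid_index (n, k) -> J R n k x ->
  gg x = 4%:R / Num.sqrt (len R n) * tentJ n k x.
Proof.
move=> vnk Jx; rewrite /gg.
have -> : xget (0%N, 0%N) [set nk | valid_index nk /\ J R nk.1 nk.2 x] = (n, k).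
  apply: xget_unique => // -[n' k'] /= [vnk' Jx'].
  case: (eqVneq (n', k') (n, k)) => // /eqP neq.
  by move: (J_disjoint R vnk' vnk neq); rewrite -subset0 => /(_ x (conj Jx' Jx)).
case: pselect => /= [_|[]//]; rewrite LJ_len /distbd /tent.
move/J_mem: Jx => /andP[lx xr].
by rewrite [`|x - Jright R n k|]distrC !ger0_norm ?subr_ge0 ?ltW.
Qed.

Lemma gg_out (x : R) : (forall n k, valid_index (n, k) -> ~ J R n k x) -> gg x = 0.
Proof. by move=> noJ; rewrite /gg; case: pselect => //= -[/noJ]. Qed.

Lemma gg_ge0 (x : R) : 0 <= gg x.
Proof.
rewrite /gg; case: pselect => //= ?.
by rewrite mulr_ge0 ?divr_ge0 ?sqrtr_ge0// /distbd le_min !normr_ge0.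
Qed.

Lemma gg_le_sqrt_dist (x y : R) :
  (forall n k, valid_index (n, k) -> J R n k x -> ~ J R n k y) ->
  gg x <= 4%:R * Num.sqrt `|x - y|.
Proof.
move=> sepxy; have [[[n k] [vnk Jx]]|noJ] :=
  pselect (exists nk, valid_index nk /\ J R nk.1 nk.2 x); last first.
  by rewrite gg_out ?mulr_ge0 ?sqrtr_ge0// => n k vnk Jx; apply: noJ; exists (n, k).
have Jy : ~ (Jleft R n k < y < Jright R n k) by move=> /J_mem; exact: sepxy.
rewrite (gg_tent vnk Jx) -mulrA [_^-1 * _]mulrC ler_pM2l//.
rewrite divr_sqrt_le_sqrt ?len_gt0 ?tent_le_dist//.
  by rewrite ltW// tent_gt0 -?J_mem.
apply: le_trans (tent_le_half _ _ _) _.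
by rewrite Jright_sub_left; have := len_gt0 R n; lra.
Qed.

Lemma gg_holder (x y : R) : `|gg x - gg y| <= 4%:R * Num.sqrt `|x - y|.
Proof.
have [[n [k [vnk [Jx Jy]]]]|sepxy] :=
  pselect (exists n k, valid_index (n, k) /\ J R n k x /\ J R n k y).
  rewrite (gg_tent vnk Jx) (gg_tent vnk Jy) -mulrBr normrM ger0_norm; last first.
    by rewrite divr_ge0 ?sqrtr_ge0.
  rewrite -mulrA [_^-1 * _]mulrC ler_pM2l//.
  rewrite divr_sqrt_le_sqrt ?normr_ge0 ?tent_lipschitz ?len_gt0//.
  apply: le_trans (tent_lipschitz _ _ _ _) _.
  move: Jx Jy => /J_mem/andP[? ?] /J_mem/andP[? ?]; have := Jright_sub_left R n k.
  by rewrite ler_norml => ?; apply/andP; split; lra.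
have gx : gg x <= 4%:R * Num.sqrt `|x - y|.
  by apply: gg_le_sqrt_dist => n k vnk Jx Jy; apply: sepxy; exists n, k.
have gy : gg y <= 4%:R * Num.sqrt `|x - y|.
  by rewrite distrC; apply: gg_le_sqrt_dist => n k vnk Jy Jx; apply: sepxy; exists n, k.
have := gg_ge0 x; have := gg_ge0 y.
by rewrite ler_norml => ? ?; apply/andP; split; lra.
Qed.

Lemma continuous_gg : continuous (@gg R).
Proof. exact: holder_half_continuous gg_holder. Qed.

Lemma gg_max n k : valid_index (n, k) ->
  (exists2 x, J R n k x & gg x = 2%:R * Num.sqrt (LJ R n k)) /\
  (forall x, J R n k x -> gg x <= 2%:R * Num.sqrt (LJ R n k)).
Proof.
move=> vnk; rewrite LJ_len.
have L0 := len_gt0 R n; have lenJ := Jright_sub_left R n k.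
have peak : 4%:R / Num.sqrt (len R n) * (len R n / 2%:R) = 2%:R * Num.sqrt (len R n).
  by rewrite mulrA divr_sqrt_mul//; lra.
have Jmid : J R n k ((Jleft R n k + Jright R n k) / 2%:R).
  by apply/J_mem; apply/andP; split; lra.
split.
  exists ((Jleft R n k + Jright R n k) / 2%:R) => //.
  by rewrite (gg_tent vnk Jmid) tent_midpoint ?lenJ// ltW// Jleft_lt_right.
move=> x Jx; rewrite (gg_tent vnk Jx) -peak ler_pM2l ?divr_gt0 ?sqrtr_gt0//.
by rewrite -lenJ tent_le_half.
Qed.

Lemma gg_eq0 (x : R) : gg x = 0 <-> ~ exists nk, valid_index nk /\ J R nk.1 nk.2 x.
Proof.
split=> [gx0 [[n k] [vnk Jx]]|noJ]; last first.
  by apply: gg_out => n k vnk Jx; apply: noJ; exists (n, k).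
move: gx0; rewrite (gg_tent vnk Jx); apply/eqP.
rewrite gt_eqF// mulr_gt0 ?tent_gt0 -?J_mem//.
by rewrite divr_gt0 ?sqrtr_gt0 ?len_gt0.
Qed.

End Profile.

Section Integrals.
Variable R : realType.
Local Notation mu := (@lebesgue_measure R).

Lemma measurable_gg (D : set R) : measurable_fun D (EFin \o (@gg R)).
Proof. exact: measurable_EFin_continuous (@continuous_gg R). Qed.

Lemma LJ_powR_3half n k : LJ R n k `^ (3%:R / 2%:R) = (3%:R ^+ n)^-1.
Proof. by rewrite LJ_len powR_3half ?len_gt0// len_mul_sqrt. Qed.

Lemma integral_gg_J n k : valid_index (n, k) ->
  (\int[mu]_(x in J R n k) (gg x)%:E = ((3%:R ^+ n)^-1)%:E)%E.
Proof.
move=> vnk; under eq_integral => x /[1!inE] Jx do rewrite (gg_tent vnk Jx).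
rewrite integral_scaled_tent ?Jleft_lt_right// Jright_sub_left -len_mul_sqrt.
by rewrite expr2 mulrA divr_sqrt_mul ?len_gt0//; congr (_%:E); field.
Qed.

Definition Jlevel i : set R :=
  \big[setU/set0]_(k <- index_iota 0 (2 ^ i)) J R i.+1 k.+1.

Lemma Jlevel_mem i x : Jlevel i x <-> exists2 k, (k < 2 ^ i)%N & J R i.+1 k.+1 x.
Proof.
rewrite /Jlevel -bigcup_seq; split=> [[k /= ki Jx]|[k ki Jx]].
  by exists k; rewrite // mem_index_iota in ki.
by exists k; rewrite //= mem_index_iota.
Qed.

Lemma measurable_Jlevel i : measurable (Jlevel i).
Proof. by apply: bigsetU_measurable => k _; exact: measurable_itv. Qed.

Lemma bigcup_Jlevel x :
  (\bigcup_i Jlevel i) x <-> exists nk, valid_index nk /\ J R nk.1 nk.2 x.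
Proof.
split=> [[i _ /Jlevel_mem[k ki Jx]]|[nk [/valid_indexE[m [i [-> lti]]] Jx]]].
  by exists (i.+1, k.+1); split=> //; exact: valid_index_succ.
by exists m => //; apply/Jlevel_mem; exists i.
Qed.

Lemma integral_gg_Jlevel i :
  (\int[mu]_(x in Jlevel i) (gg x)%:E = ((2 ^ i)%:R / 3%:R ^+ i.+1)%:E)%E.
Proof.
rewrite ge0_integral_bigsetU //=; first last.
- by move=> x _; rewrite lee_fin gg_ge0.
- exact: measurable_gg.
- move=> k k' /=; rewrite !mem_index_iota => /andP[_ ki] /andP[_ k'i] [x [Jx Jx']].
  by case: (J_succ_unique ki k'i Jx Jx').
- exact: iota_uniq.
- by move=> k; exact: measurable_itv.
rewrite big_seq (eq_bigr (fun=> ((3%:R ^+ i.+1)^-1)%:E)); last first.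
  move=> k; rewrite mem_index_iota => /andP[_ ki].
  exact/integral_gg_J/valid_index_succ.
by rewrite -big_seq sumEFin sumr_const_nat subn0 mulr_natl.
Qed.

Lemma trivIset_Jlevel : trivIset setT Jlevel.
Proof.
move=> i j _ _ [x [/Jlevel_mem[k ki Jx] /Jlevel_mem[k' k'j Jx']]].
by case: (J_succ_unique ki k'j Jx Jx').
Qed.

End Integrals.

Section Series.
Variable R : realType.
Local Notation r := (rr R).
Local Notation mu := (@lebesgue_measure R).

Lemma MM_series :
  (fun N : nat => \sum_(0 <= m < N) (2%:R ^+ m / r ^+ m.+1)) @ \oo --> MM R.
Proof.
have r_gt0 := rr_gt0 R; have r_gt2 := rr_gt2 R.
have z1 : `|2%:R / r| < 1 by rewrite ger0_norm ?divr_ge0 ?ltW// ltr_pdivrMr// mul1r.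
have -> : MM R = r^-1 * (1 - 2%:R / r)^-1.
  by rewrite /MM; field; rewrite !gt_eqF// subr_gt0.
apply: cvg_geometric_partial_sums z1 _ => i.
by rewrite exprS expr_div_n invfM mulrCA mulrA.
Qed.

Lemma sum_2pow_div_3powS :
  (\sum_(i <oo) (((2 ^ i)%:R / 3%:R ^+ i.+1)%:E : \bar R) = 1)%E.
Proof.
pose u i : R := (2 ^ i)%:R / 3%:R ^+ i.+1.
have z1 : `|2%:R / 3%:R : R| < 1 by rewrite ger0_norm// ltr_pdivrMr// mul1r ltr_nat.
have cvg_u : (fun N => \sum_(0 <= i < N) u i) @ \oo -->
    (3%:R^-1 * (1 - 2%:R / 3%:R)^-1 : R).
  apply: cvg_geometric_partial_sums z1 _ => i.
  by rewrite /u exprS expr_div_n invfM natrX mulrCA mulrA.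
transitivity (limn (EFin \o (fun N => \sum_(0 <= i < N) u i))).
  by apply/congr_lim/funext => N /=; rewrite sumEFin.
rewrite EFin_lim; last by apply/cvg_ex; exists (3%:R^-1 * (1 - 2%:R / 3%:R)^-1).
by rewrite (cvg_lim _ cvg_u)//; congr (_%:E); field.
Qed.

Lemma integral_gg_itv0M : (\int[mu]_(x in `[0%R, MM R]) (gg x)%:E = 1)%E.
Proof.
have sub0M : \bigcup_i @Jlevel R i `<=` `[0%R, MM R].
  move=> x /bigcup_Jlevel[[n k] [vnk Jx]]; have /andP[? ?] := J_sub_itv0M vnk Jx.
  by rewrite /= in_itv/= !ltW.
have mJ : measurable (\bigcup_i @Jlevel R i).
  by apply: bigcupT_measurable => i; exact: measurable_Jlevel.
rewrite -(setDUK sub0M) integral_setU //; last 3 first.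
- exact: measurableD.
- exact: measurable_gg.
- by rewrite disj_set2E setDIK.
rewrite [X in (_ + X)%E]integral0_eq ?adde0; last first.
  by move=> x [_ nJx] /=; congr (_%:E); apply/gg_eq0 => /bigcup_Jlevel.
rewrite ge0_integral_bigcup //; last 4 first.
- exact: measurable_Jlevel.
- exact: measurable_gg.
- by move=> x _; rewrite lee_fin gg_ge0.
- exact: trivIset_Jlevel.
by rewrite -sum_2pow_div_3powS; apply: eq_eseriesr => i _; exact: integral_gg_Jlevel.
Qed.

End Series.

Theorem lemma3 (R : realType) :
  (* M = sum_{n>=1} 2^(n-1) / (3^(2/3))^n *)
  ((fun N : nat => \sum_(0 <= m < N) (2%:R ^+ m / rr R ^+ m.+1)) @ \oo
     --> MM R) /\
  (* the intervals J_n^k are pairwise disjoint *)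
  (forall n k n' k' : nat, valid_index (n, k) -> valid_index (n', k') ->
     (n, k) <> (n', k') -> J R n k `&` J R n' k' = set0) /\
  (* g takes values in [0, oo) *)
  (forall x : R, x \in `[0, MM R] -> 0 <= gg x) /\
  (* (1) *)
  (forall n k : nat, valid_index (n, k) ->
     (exists2 x, J R n k x & gg x = 2%:R * Num.sqrt (LJ R n k)) /\
     (forall x, J R n k x -> gg x <= 2%:R * Num.sqrt (LJ R n k))) /\
  (* (2) *)
  (forall x : R, x \in `[0, MM R] -> (gg x = 0 <-> AA R x)) /\
  (* (3) *)
  (forall n k : nat, valid_index (n, k) ->
     ((\int[@lebesgue_measure R]_(x in J R n k) (gg x)%:E)%E = (LJ R n k `^ (3%:R / 2%:R))%:E) /\
     LJ R n k `^ (3%:R / 2%:R) = (3%:R ^+ n)^-1) /\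
  ((\int[@lebesgue_measure R]_(x in `[0%R, MM R]) (gg x)%:E)%E = 1%E) /\
  (* (4) g is 1/2-Hoelder on [0, M] *)
  (exists C : R, forall x y : R, x \in `[0, MM R] -> y \in `[0, MM R] ->
     `|gg x - gg y| <= C * Num.sqrt `|x - y|).
Proof.
split; first exact: MM_series.
split; first exact: J_disjoint.
split; first by move=> x _; exact: gg_ge0.
split; first exact: gg_max.
split.
  move=> x x0M; rewrite gg_eq0; split=> [noJ|[]//].
  by split=> //; rewrite inE in x0M.
split; first by move=> n k vnk; rewrite LJ_powR_3half integral_gg_J.
split; first exact: integral_gg_itv0M.
by exists 4%:R => x y _ _; exact: gg_holder.
Qed.
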